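(* For every state $\rho$ on $\mathbb{C}^M\otimes\mathbb{C}^N$ and all unitaries $U_1$ on $\mathbb{C}^M$ and $U_2$ on $\mathbb{C}^N$, $d_{\max}\big((U_1\otimes U_2)\rho(U_1\otimes U_2)^\dagger\big)=d_{\max}(\rho)$.
   Context: For a state $\rho$ on $\mathbb{C}^M\otimes\mathbb{C}^N$ let $\rho_B=\mathrm{Tr}_A(\rho)$. A unitary $U^B$ on $\mathbb{C}^N$ is called cyclic for $\rho$ if $[\rho_B,U^B]=0$. Set $\rho_f=(I\otimes U^B)\rho(I\otimes U^{B\dagger})$ and define the Fu distance $d(\rho,U^B)=\frac{1}{\sqrt2}\|\rho-\rho_f\|_F$ (Frobenius norm $\|X\|_F=\sqrt{\mathrm{Tr}(X^\dagger X)}$). Define $d_{\max}(\rho)=\max\{d(\rho,U^B): U^B \text{ unitary},\ [\rho_B,U^B]=0\}$. *)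

From HB Require Import structures.
From mathcomp Require Import all_boot all_order all_algebra.
From mathcomp Require Import boolp classical_sets reals.
From mathcomp Require Import complex mxtens.

Set Implicit Arguments.
Unset Strict Implicit.
Unset Printing Implicit Defensive.

Import Order.TTheory GRing.Theory Num.Theory.
Local Open Scope ring_scope.
Local Open Scope classical_set_scope.

Section QDefs.
Variable R : realType.
Local Notation C := (R[i]).

Definition adj {m n : nat} (A : 'M[C]_(m, n)) : 'M[C]_(n, m) :=
  (map_mx Num.conj A)^T.

Definition unitary {n : nat} (U : 'M[C]_n) : Prop :=
  adj U *m U = 1%:M /\ U *m adj U = 1%:M.

Definition is_state {n : nat} (rho : 'M[C]_n) : Prop :=
  [/\ adj rho = rho,
      (forall v : 'cV[C]_n, 0 <= (adj v *m rho *m v) 0 0)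
    & \tr rho = 1].

(* partial trace over the first factor C^M of C^M (x) C^N,
   with the Kronecker-product index convention of tensmx *)
Definition ptraceA {M N : nat} (rho : 'M[C]_(M * N)) : 'M[C]_N :=
  \matrix_(j, l) \sum_(i < M) rho (mxtens_index (i, j)) (mxtens_index (i, l)).

Definition frob {n : nat} (X : 'M[C]_n) : R :=
  Num.sqrt (complex.Re (\tr (adj X *m X))).

Definition fu_dist {M N : nat} (rho : 'M[C]_(M * N)) (U : 'M[C]_N) : R :=
  let rho_f := (1%:M *t U) *m rho *m adj (1%:M *t U) in
  frob (rho - rho_f) / Num.sqrt 2.

(* d_max(rho) = max of d(rho,U) over unitaries U commuting with rho_B
   (the set is nonempty and compact, so the sup is attained) *)
Definition dmax {M N : nat} (rho : 'M[C]_(M * N)) : R :=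
  sup [set fu_dist rho U | U in
        [set U : 'M[C]_N | unitary U /\ ptraceA rho *m U = U *m ptraceA rho]].

End QDefs.

(* Conjugating rho by W = U1 (x) U2 conjugates its reduced state rho_B by U2,
   so V |-> U2 V U2^dagger maps the unitaries cyclic for rho bijectively onto
   those cyclic for W rho W^dagger.  Since (1 (x) U2 V U2^dagger) W = W (1 (x) V),
   the difference rho' - rho'_f is the W-conjugate of rho - rho_f, and the
   Frobenius norm is unitarily invariant; hence both maxima range over the
   same set of distances. *)

From mathcomp Require Import all_boot all_order all_algebra.
From mathcomp Require Import classical_sets reals.
From mathcomp Require Import complex mxtens.

Set Implicit Arguments.
Unset Strict Implicit.
Unset Printing Implicit Defensive.

Import GRing.Theory Num.Theory.
Local Open Scope ring_scope.
Local Open Scope classical_set_scope.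

Section Adjoint.
Variable R : realType.
Local Notation C := (R[i]).

Lemma adjE m n (A : 'M[C]_(m, n)) i j : adj A i j = (A j i)^*.
Proof. by rewrite !mxE. Qed.

Lemma adjK m n (A : 'M[C]_(m, n)) : adj (adj A) = A.
Proof. by apply/matrixP => i j; rewrite !adjE conjCK. Qed.

Lemma adj_mul m n p (A : 'M[C]_(m, n)) (B : 'M[C]_(n, p)) :
  adj (A *m B) = adj B *m adj A.
Proof. by rewrite /adj map_mxM trmx_mul. Qed.

Lemma adj1 n : adj (1%:M : 'M[C]_n) = 1%:M.
Proof. by apply/matrixP => i j; rewrite !mxE eq_sym rmorph_nat. Qed.

Lemma adj_tens m n p q (A : 'M[C]_(m, n)) (B : 'M[C]_(p, q)) :
  adj (A *t B) = adj A *t adj B.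
Proof. by rewrite /adj map_mxT trmx_tens. Qed.

Lemma tensmx11 m n : (1%:M : 'M[C]_m) *t (1%:M : 'M[C]_n) = 1%:M.
Proof.
apply/matrixP => i j.
case: (mxtens_indexP i) => a b; case: (mxtens_indexP j) => c d.
rewrite tensmxE !mxE -natrM (inj_eq (can_inj (@mxtens_indexK _ _))).
by rewrite xpair_eqE mulnb.
Qed.

Lemma unitary_tens m n (U1 : 'M[C]_m) (U2 : 'M[C]_n) :
  unitary U1 -> unitary U2 -> unitary (U1 *t U2).
Proof.
case=> a1 a2 [b1 b2]; split;
  by rewrite adj_tens tensmx_mul ?a1 ?b1 ?a2 ?b2 tensmx11.
Qed.

End Adjoint.

Section UnitaryConjugation.
Variable R : realType.
Local Notation C := (R[i]).

Definition uconj {n} (W X : 'M[C]_n) : 'M[C]_n := W *m X *m adj W.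

Lemma uconj_comp n (A B X : 'M[C]_n) : uconj A (uconj B X) = uconj (A *m B) X.
Proof. by rewrite /uconj adj_mul !mulmxA. Qed.

Lemma uconjB n (W X Y : 'M[C]_n) : uconj W (X - Y) = uconj W X - uconj W Y.
Proof. by rewrite /uconj mulmxBr mulmxBl. Qed.

Lemma adj_uconj n (W X : 'M[C]_n) : adj (uconj W X) = uconj W (adj X).
Proof. by rewrite /uconj !adj_mul adjK mulmxA. Qed.

Lemma mxtrace_uconj n (W X : 'M[C]_n) : unitary W -> \tr (uconj W X) = \tr X.
Proof. by case=> W'W _; rewrite /uconj mxtrace_mulC mulmxA W'W mul1mx. Qed.

Variables (n : nat) (W : 'M[C]_n).
Hypothesis unitW : unitary W.

Lemma uconj1 : uconj W 1%:M = 1%:M.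
Proof. by case: unitW => _ WW'; rewrite /uconj mulmx1. Qed.

Lemma uconjM X Y : uconj W (X *m Y) = uconj W X *m uconj W Y.
Proof.
case: unitW => W'W _; rewrite /uconj !mulmxA.
by rewrite -[W *m X *m adj W *m W]mulmxA W'W mulmx1.
Qed.

Lemma uconjK : cancel (uconj W) (uconj (adj W)).
Proof.
by case: unitW => W'W _ X; rewrite uconj_comp W'W /uconj adj1 mul1mx mulmx1.
Qed.

Lemma uconjKV : cancel (uconj (adj W)) (uconj W).
Proof.
by case: unitW => _ WW' X; rewrite uconj_comp WW' /uconj adj1 mul1mx mulmx1.
Qed.

Lemma uconj_inj : injective (uconj W).
Proof. exact: can_inj uconjK. Qed.

Lemma uconj_eq1 X : uconj W X = 1%:M <-> X = 1%:M.
Proof. by rewrite -{1}uconj1; split=> [/uconj_inj|->]. Qed.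

Lemma unitary_uconj V : unitary (uconj W V) <-> unitary V.
Proof.
rewrite /unitary (adj_uconj W V) -!uconjM.
by split=> -[h1 h2]; split; apply/uconj_eq1.
Qed.

Lemma commute_uconj P V :
  uconj W P *m uconj W V = uconj W V *m uconj W P <-> P *m V = V *m P.
Proof. by rewrite -!uconjM; split=> [/uconj_inj|->]. Qed.

Lemma frob_uconj X : frob (uconj W X) = frob X.
Proof. by rewrite /frob adj_uconj -uconjM mxtrace_uconj. Qed.

End UnitaryConjugation.

Section TensorEntries.
Variable K : comPzRingType.

Lemma sum_mxtens_index (V : nmodType) m n (F : 'I_(m * n) -> V) :
  \sum_(k < m * n) F k = \sum_(a < m) \sum_(b < n) F (mxtens_index (a, b)).
Proof.
rewrite pair_big (reindex (@mxtens_index m n)) /=; last first.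
  by exists (@mxtens_unindex m n) => k _;
    rewrite (mxtens_indexK, mxtens_unindexK).
by apply: eq_bigr => -[a b].
Qed.

Lemma sum_mulrn_eq (V : nmodType) n (F : 'I_n -> V) j :
  \sum_(b < n) F b *+ (j == b) = F j.
Proof.
rewrite (bigD1 j) //= eqxx mulr1n big1 ?addr0 // => b.
by rewrite eq_sym => /negbTE ->; rewrite mulr0n.
Qed.

Lemma tens_mulmxE m n p (A : 'M[K]_m) (B : 'M[K]_n) (X : 'M[K]_(m * n, p)) i j k :
  ((A *t B) *m X) (mxtens_index (i, j)) k =
  \sum_(a < m) \sum_(b < n) A i a * B j b * X (mxtens_index (a, b)) k.
Proof.
rewrite mxE sum_mxtens_index.
by under eq_bigr do under eq_bigr do rewrite tensmxE.
Qed.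

Lemma mulmx_tensE m n p (X : 'M[K]_(p, m * n)) (A : 'M[K]_m) (B : 'M[K]_n) k i j :
  (X *m (A *t B)) k (mxtens_index (i, j)) =
  \sum_(a < m) \sum_(b < n) X k (mxtens_index (a, b)) * (A a i * B b j).
Proof.
rewrite mxE sum_mxtens_index.
by under eq_bigr do under eq_bigr do rewrite tensmxE.
Qed.

Lemma tensmx1_mulmxE m n p (A : 'M[K]_m) (X : 'M[K]_(m * n, p)) i j k :
  ((A *t 1%:M) *m X) (mxtens_index (i, j)) k =
  \sum_(a < m) A i a * X (mxtens_index (a, j)) k.
Proof.
rewrite tens_mulmxE; apply: eq_bigr => a _.
by under eq_bigr do rewrite mxE mulrnAr mulr1 mulrnAl; apply: sum_mulrn_eq.
Qed.

Lemma tens1mx_mulmxE m n p (B : 'M[K]_n) (X : 'M[K]_(m * n, p)) i j k :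
  ((1%:M *t B) *m X) (mxtens_index (i, j)) k =
  \sum_(b < n) B j b * X (mxtens_index (i, b)) k.
Proof.
rewrite tens_mulmxE exchange_big; apply: eq_bigr => b _.
by under eq_bigr do rewrite mxE mulrnAl mul1r mulrnAl; apply: sum_mulrn_eq.
Qed.

Lemma mulmx_tensmx1E m n p (X : 'M[K]_(p, m * n)) (A : 'M[K]_m) k i j :
  (X *m (A *t 1%:M)) k (mxtens_index (i, j)) =
  \sum_(a < m) X k (mxtens_index (a, j)) * A a i.
Proof.
rewrite mulmx_tensE; apply: eq_bigr => a _.
by under eq_bigr do rewrite mxE eq_sym mulrnAr mulr1 mulrnAr; apply: sum_mulrn_eq.
Qed.

Lemma mulmx_tens1mxE m n p (X : 'M[K]_(p, m * n)) (B : 'M[K]_n) k i j :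
  (X *m (1%:M *t B)) k (mxtens_index (i, j)) =
  \sum_(b < n) X k (mxtens_index (i, b)) * B b j.
Proof.
rewrite mulmx_tensE exchange_big; apply: eq_bigr => b _.
by under eq_bigr do rewrite mxE eq_sym mulrnAl mul1r mulrnAr; apply: sum_mulrn_eq.
Qed.

End TensorEntries.

Section PartialTrace.
Variable R : realType.
Local Notation C := (R[i]).

Lemma ptraceA_tensmx1_mulC m n (A : 'M[C]_m) (X : 'M[C]_(m * n)) :
  ptraceA ((A *t 1%:M) *m X) = ptraceA (X *m (A *t 1%:M)).
Proof.
apply/matrixP => j l; rewrite !mxE.
under eq_bigr do rewrite tensmx1_mulmxE.
under [RHS]eq_bigr do rewrite mulmx_tensmx1E.
rewrite exchange_big; apply: eq_bigr => a _; apply: eq_bigr => i _; exact: mulrC.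
Qed.

Lemma ptraceA_tens1mx_mul m n (B : 'M[C]_n) (X : 'M[C]_(m * n)) :
  ptraceA ((1%:M *t B) *m X) = B *m ptraceA X.
Proof.
apply/matrixP => j l; rewrite !mxE.
under eq_bigr do rewrite tens1mx_mulmxE.
by rewrite exchange_big; apply: eq_bigr => b _; rewrite mxE mulr_sumr.
Qed.

Lemma ptraceA_mul_tens1mx m n (B : 'M[C]_n) (X : 'M[C]_(m * n)) :
  ptraceA (X *m (1%:M *t B)) = ptraceA X *m B.
Proof.
apply/matrixP => j l; rewrite !mxE.
under eq_bigr do rewrite mulmx_tens1mxE.
by rewrite exchange_big; apply: eq_bigr => b _; rewrite mxE mulr_suml.
Qed.

Lemma ptraceA_uconj_tens m n (U1 : 'M[C]_m) (U2 : 'M[C]_n) (X : 'M[C]_(m * n)) :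
  unitary U1 -> ptraceA (uconj (U1 *t U2) X) = uconj U2 (ptraceA X).
Proof.
case=> U1'U1 _; rewrite /uconj adj_tens (tensmx_decl U1) (tensmx_decr (adj U1)).
rewrite -!mulmxA ptraceA_tens1mx_mul !mulmxA ptraceA_mul_tens1mx.
rewrite -mulmxA ptraceA_tensmx1_mulC -mulmxA tensmx_mul U1'U1.
by rewrite mul1mx tensmx11 mulmx1 mulmxA.
Qed.

End PartialTrace.

Section LocalUnitaryInvariance.
Variable R : realType.
Local Notation C := (R[i]).

Lemma fu_distE M N (rho : 'M[C]_(M * N)) (U : 'M[C]_N) :
  fu_dist rho U = frob (rho - uconj (1%:M *t U) rho) / Num.sqrt 2.
Proof. by []. Qed.

Definition cyclic_unitary M N (rho : 'M[C]_(M * N)) (U : 'M[C]_N) : Prop :=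
  unitary U /\ ptraceA rho *m U = U *m ptraceA rho.

Variables (M N : nat) (U1 : 'M[C]_M) (U2 : 'M[C]_N).
Hypotheses (unitU1 : unitary U1) (unitU2 : unitary U2).
Local Notation W := (U1 *t U2).

Lemma fu_dist_uconj_tens (rho : 'M[C]_(M * N)) V :
  fu_dist (uconj W rho) (uconj U2 V) = fu_dist rho V.
Proof.
have intertwine : (1%:M *t uconj U2 V) *m W = W *m (1%:M *t V).
  rewrite !tensmx_mul mul1mx mulmx1 /uconj -(mulmxA _ (adj U2)).
  by rewrite (proj1 unitU2) mulmx1.
rewrite !fu_distE uconj_comp intertwine -uconj_comp -uconjB.
by rewrite (frob_uconj (unitary_tens unitU1 unitU2)).
Qed.

Lemma cyclic_unitary_uconj_tens (rho : 'M[C]_(M * N)) V :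
  cyclic_unitary (uconj W rho) (uconj U2 V) <-> cyclic_unitary rho V.
Proof.
rewrite /cyclic_unitary ptraceA_uconj_tens //.
split=> -[uV cV]; split;
  by [apply/(unitary_uconj unitU2) | apply/(commute_uconj unitU2)].
Qed.

Lemma fu_dist_image_uconj_tens (rho : 'M[C]_(M * N)) :
  [set fu_dist (uconj W rho) U | U in cyclic_unitary (uconj W rho)] =
  [set fu_dist rho V | V in cyclic_unitary rho].
Proof.
apply/seteqP; split=> _ [U cU <-].
- exists (uconj (adj U2) U); last by rewrite -fu_dist_uconj_tens uconjKV.
  by apply/cyclic_unitary_uconj_tens; rewrite uconjKV.
- exists (uconj U2 U); first exact/cyclic_unitary_uconj_tens.
  by rewrite fu_dist_uconj_tens.
Qed.

End LocalUnitaryInvariance.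

Theorem lemma2 (R : realType) (M N : nat) (rho : 'M[R[i]]_(M * N))
  (U1 : 'M[R[i]]_M) (U2 : 'M[R[i]]_N) :
  is_state rho -> unitary U1 -> unitary U2 ->
  dmax ((U1 *t U2) *m rho *m adj (U1 *t U2)) = dmax rho.
Proof.
move=> _ unitU1 unitU2.
exact: (congr1 sup (fu_dist_image_uconj_tens unitU1 unitU2 rho)).
Qed.
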